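(* Let $S$ be a semigroup with a subsemigroup $T$ such that $S\setminus T$ is an ideal of $S$. If $S$ is finitely right equated then so is $T$.
   Context: For a semigroup $S$ and $a\in S$, $\mathbf{r}_S(a)=\{(s,t)\in S\times S\mid as=at\}$; $S$ is finitely right equated if each $\mathbf{r}_S(a)$ is finitely generated as a right congruence (the smallest right congruence containing some finite set). *)

From Stdlib Require Import List ProofIrrelevance.

Record semigroup := Semigroup {
  carrier :> Type;
  sop : carrier -> carrier -> carrier;
  sop_assoc : forall x y z, sop x (sop y z) = sop (sop x y) z
}.

Arguments sop {s} _ _.

Definition subsemigroup_closed (S : semigroup) (T : S -> Prop) : Prop :=
  forall x y, T x -> T y -> T (sop x y).

Definition is_ideal (S : semigroup) (I : S -> Prop) : Prop :=
  forall s u, I u -> I (sop s u) /\ I (sop u s).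

Definition sub_op (S : semigroup) (T : S -> Prop) (HT : subsemigroup_closed S T)
  (a b : {x : S | T x}) : {x : S | T x} :=
  exist _ (sop (proj1_sig a) (proj1_sig b)) (HT _ _ (proj2_sig a) (proj2_sig b)).

Arguments sub_op {S T} HT a b.

Lemma sub_op_assoc (S : semigroup) (T : S -> Prop) (HT : subsemigroup_closed S T) :
  forall x y z, sub_op HT x (sub_op HT y z) = sub_op HT (sub_op HT x y) z.
Proof.
  intros [x hx] [y hy] [z hz]. unfold sub_op; simpl.
  apply eq_sig_hprop.
  - intros w p q. apply proof_irrelevance.
  - simpl. apply sop_assoc.
Qed.

Arguments sub_op_assoc {S T} HT x y z.

Definition sub_semigroup (S : semigroup) (T : S -> Prop)
  (HT : subsemigroup_closed S T) : semigroup :=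
  @Semigroup {x : S | T x} (sub_op HT) (sub_op_assoc HT).

Definition r_ann (S : semigroup) (a : S) (s t : S) : Prop := sop a s = sop a t.

Definition right_congruence (S : semigroup) (R : S -> S -> Prop) : Prop :=
  (forall x, R x x) /\ (forall x y, R x y -> R y x) /\
  (forall x y z, R x y -> R y z -> R x z) /\
  (forall x y u, R x y -> R (sop x u) (sop y u)).

Definition rc_generated (S : semigroup) (X : S * S -> Prop) (s t : S) : Prop :=
  forall R, right_congruence S R -> (forall p, X p -> R (fst p) (snd p)) -> R s t.

Definition finitely_right_equated (S : semigroup) : Prop :=
  forall a : S, exists l : list (S * S),
    forall s t, r_ann S a s t <-> rc_generated S (fun p => In p l) s t.

Arguments sub_semigroup {S T} HT.

From Stdlib Require Import List ProofIrrelevance Classical.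

(* Let a lie in T and let X generate r_S(a); we show that X ∩ (T × T) generates
   r_T(a).  Given a right congruence R on T containing X ∩ (T × T), extend
   R ∩ r_T(a) to S by also relating x and y whenever ax = ay lies outside T.
   Because S \ T is an ideal this is a right congruence on S, and it contains X:
   a pair of X not inside T × T has a factor outside T, so a times it is outside
   T.  Hence it contains r_S(a), and on T × T, where a x stays in T, it is R. *)

Lemma restrict_pair_list (A : Type) (P : A -> Prop) (l : list (A * A)) :
  exists l' : list ({x | P x} * {x | P x}),
    forall p, In p l' <-> In (proj1_sig (fst p), proj1_sig (snd p)) l.
Proof.
  induction l as [|[c d] l [l' IH]].
  - exists nil. simpl. tauto.
  - destruct (classic (P c /\ P d)) as [[hc hd]|hcd].
    + exists ((exist _ c hc, exist _ d hd) :: l'). intros [[x hx] [y hy]]; simpl.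
      rewrite IH; simpl. split; intros [E|H]; auto; left.
      * now injection E as -> ->.
      * injection E as -> ->. f_equal; apply subset_eq_compat; reflexivity.
    + exists l'. intros [[x hx] [y hy]]; simpl. rewrite IH; simpl.
      split; auto. intros [E|H]; auto. injection E as -> ->. tauto.
Qed.

Section GeneratedRightCongruence.
Variable S : semigroup.

Lemma rc_generated_base (X : S * S -> Prop) p :
  X p -> rc_generated S X (fst p) (snd p).
Proof. intros Hp R _ HR. exact (HR p Hp). Qed.

Lemma rc_generated_least (X : S * S -> Prop) (R : S -> S -> Prop) :
  right_congruence S R -> (forall p, X p -> R (fst p) (snd p)) ->
  forall s t, rc_generated S X s t -> R s t.
Proof. intros HR HX s t Hst. exact (Hst R HR HX). Qed.

Lemma rc_generated_unique (X : S * S -> Prop) (K : S -> S -> Prop) :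
  right_congruence S K -> (forall p, X p -> K (fst p) (snd p)) ->
  (forall R, right_congruence S R -> (forall p, X p -> R (fst p) (snd p)) ->
     forall s t, K s t -> R s t) ->
  forall s t, K s t <-> rc_generated S X s t.
Proof.
  intros HK HX Hmin s t. split.
  - intros Hst R HR HXR. exact (Hmin R HR HXR s t Hst).
  - exact (rc_generated_least X K HK HX s t).
Qed.

Lemma r_ann_right_congruence (a : S) : right_congruence S (r_ann S a).
Proof.
  unfold r_ann. split; [|split; [|split]]; intros; try congruence.
  rewrite !sop_assoc. congruence.
Qed.

Lemma right_congruence_meet (R1 R2 : S -> S -> Prop) :
  right_congruence S R1 -> right_congruence S R2 ->
  right_congruence S (fun x y => R1 x y /\ R2 x y).
Proof.
  intros (Hr1 & Hs1 & Ht1 & Hc1) (Hr2 & Hs2 & Ht2 & Hc2).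
  split; [|split; [|split]]; intros; split; firstorder eauto.
Qed.

End GeneratedRightCongruence.

Section IdealComplement.
Variables (S : semigroup) (T : S -> Prop).
Hypothesis HT : subsemigroup_closed S T.
Hypothesis Hideal : is_ideal S (fun x => ~ T x).

Let Tsg := sub_semigroup HT.

Lemma notT_mull x y : ~ T y -> ~ T (sop x y).
Proof. intros hy. exact (proj1 (Hideal x y hy)). Qed.

Lemma notT_mulr x y : ~ T x -> ~ T (sop x y).
Proof. intros hx. exact (proj2 (Hideal y x hx)). Qed.

Lemma sub_r_annE (a : Tsg) (x y : Tsg) :
  r_ann Tsg a x y <-> r_ann S (proj1_sig a) (proj1_sig x) (proj1_sig y).
Proof.
  destruct a as [a ha], x as [x hx], y as [y hy]. unfold r_ann; simpl. split.
  - intros E. exact (f_equal (@proj1_sig _ _) E).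
  - intros E. apply subset_eq_compat. exact E.
Qed.

Variables (a : S) (ha : T a).

Definition extend_rel (R : Tsg -> Tsg -> Prop) (x y : S) : Prop :=
  (exists hx hy, R (exist _ x hx) (exist _ y hy)) \/
  (~ T (sop a x) /\ sop a x = sop a y).

Lemma extend_right_congruence (R : Tsg -> Tsg -> Prop) :
  right_congruence Tsg R ->
  (forall x y, R x y -> sop a (proj1_sig x) = sop a (proj1_sig y)) ->
  right_congruence S (extend_rel R).
Proof.
  intros (Hrefl & Hsym & Htrans & Hcomp) Hann. unfold extend_rel.
  split; [|split; [|split]].
  - intros x. destruct (classic (T x)) as [hx|hx].
    + left. exists hx, hx. apply Hrefl.
    + right. split; [apply notT_mull, hx|reflexivity].
  - intros x y [(hx & hy & H)|[H1 H2]].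
    + left. exists hy, hx. auto.
    + right. split; [rewrite <- H2|]; auto.
  - intros x y z [(hx & hy & H)|[H1 H2]] [(hy' & hz & H')|[H1' H2']].
    + left. exists hx, hz. apply (Htrans _ (exist _ y hy)); auto.
      replace hy with hy' by apply proof_irrelevance. exact H'.
    + exfalso. apply H1'. apply HT; assumption.
    + exfalso. apply H1. rewrite H2. apply HT; assumption.
    + right. split; congruence.
  - intros x y u [(hx & hy & H)|[H1 H2]].
    + destruct (classic (T u)) as [hu|hu].
      * left. exists (HT _ _ hx hu), (HT _ _ hy hu).
        exact (Hcomp _ _ (exist _ u hu) H).
      * right. split.
        -- apply notT_mull, notT_mull, hu.
        -- rewrite !sop_assoc. f_equal. exact (Hann _ _ H).
    + right. split.
      * rewrite sop_assoc. apply notT_mulr, H1.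
      * rewrite !sop_assoc, H2. reflexivity.
Qed.

Lemma extend_rel_base (R : Tsg -> Tsg -> Prop) c d :
  sop a c = sop a d -> (forall hc hd, R (exist _ c hc) (exist _ d hd)) ->
  extend_rel R c d.
Proof.
  intros Ecd HR. unfold extend_rel.
  destruct (classic (T c /\ T d)) as [[hc hd]|hcd].
  - left. exists hc, hd. apply HR.
  - right. split; [|exact Ecd].
    destruct (classic (T c)) as [hc|hc].
    + rewrite Ecd. apply notT_mull. tauto.
    + apply notT_mull, hc.
Qed.

Lemma sub_r_ann_generated (l : list (S * S)) (l' : list (Tsg * Tsg)) :
  (forall s t, r_ann S a s t <-> rc_generated S (fun p => In p l) s t) ->
  (forall p, In p l' <-> In (proj1_sig (fst p), proj1_sig (snd p)) l) ->
  forall s t : Tsg,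
    r_ann Tsg (exist _ a ha) s t <-> rc_generated Tsg (fun p => In p l') s t.
Proof.
  intros Hl Hl'.
  assert (Hl_ann : forall c d, In (c, d) l -> sop a c = sop a d).
  { intros c d Hin. apply Hl. exact (rc_generated_base S _ (c, d) Hin). }
  apply rc_generated_unique; [apply r_ann_right_congruence| |].
  - intros p Hp. apply sub_r_annE, Hl_ann, Hl', Hp.
  - intros R HR Hl'R s t Hst. apply sub_r_annE in Hst; simpl in Hst.
    set (R' := fun x y : Tsg => R x y /\ r_ann Tsg (exist _ a ha) x y).
    assert (HR' : right_congruence Tsg R')
      by exact (right_congruence_meet Tsg R _ HR (r_ann_right_congruence Tsg _)).
    assert (Hext : extend_rel R' (proj1_sig s) (proj1_sig t)).
    { apply (rc_generated_least S (fun p => In p l)); [| |apply Hl, Hst].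
      { apply extend_right_congruence; [exact HR'|].
        intros x y [_ H]. exact (proj1 (sub_r_annE _ x y) H). }
      intros [c d] Hin; simpl.
      apply extend_rel_base; [exact (Hl_ann c d Hin)|intros hc hd; split].
      - apply (Hl'R (exist _ c hc, exist _ d hd)), Hl', Hin.
      - apply sub_r_annE, Hl_ann, Hin. }
    destruct s as [s hs], t as [t ht].
    destruct Hext as [(hs' & ht' & [H _])|[Has _]].
    + replace hs with hs' by apply proof_irrelevance.
      replace ht with ht' by apply proof_irrelevance. exact H.
    + exfalso. apply Has, HT; assumption.
Qed.

End IdealComplement.

Theorem mainTheorem16 (S : semigroup) (T : S -> Prop)
  (HT : subsemigroup_closed S T)
  (Hideal : is_ideal S (fun x => ~ T x)) :
  finitely_right_equated S -> finitely_right_equated (sub_semigroup HT).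
Proof.
  intros HS [a ha].
  destruct (HS a) as [l Hl].
  destruct (restrict_pair_list S T l) as [l' Hl'].
  exists l'.
  exact (sub_r_ann_generated S T HT Hideal a ha l l' Hl Hl').
Qed.
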